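(* Let $N, n, p, \ell, K \in \mathbb{N}$ with $n \le N$. For $i = 1, \dots, \ell$ let $\boldsymbol A_i \in \mathbb{R}^{N \times N_i}$ with $N_i = \binom{N+i-1}{i}$, and let $\boldsymbol B \in \mathbb{R}^{N \times p}$. Consider the discrete-time system with polynomial nonlinear terms $$\boldsymbol f(\boldsymbol x, \boldsymbol u) = \sum_{i=1}^{\ell} \boldsymbol A_i \boldsymbol x^i + \boldsymbol B \boldsymbol u, \qquad \boldsymbol x \in \mathbb{R}^N,\ \boldsymbol u \in \mathbb{R}^p.$$ Let $\boldsymbol V_n \in \mathbb{R}^{N \times n}$ have orthonormal columns spanning the subspace $\mathcal{V}_n \subset \mathbb{R}^N$. Define the (intrusive, Galerkin) reduced operators $\tilde{\boldsymbol B} = \boldsymbol V_n^T \boldsymbol B$ and, for $i = 1, \dots, \ell$, $\tilde{\boldsymbol A}_i \in \mathbb{R}^{n \times n_i}$ with $n_i = \binom{n+i-1}{i}$ as the unique matrix satisfying $\tilde{\boldsymbol A}_i \boldsymbol y^i = \boldsymbol V_n^T \boldsymbol A_i (\boldsymbol V_n \boldsymbol y)^i$ for all $\boldsymbol y \in \mathbb{R}^n$. Let $\boldsymbol x_0 \in \mathcal{V}_n$ and let $\boldsymbol u_0, \dots, \boldsymbol u_{K-1} \in \mathbb{R}^p$. Define the re-projected states by $\bar{\boldsymbol x}_0 = \boldsymbol V_n^T \boldsymbol x_0$ and $\bar{\boldsymbol x}_{k+1} = \boldsymbol V_n^T \boldsymbol f(\boldsymbol V_n \bar{\boldsymbol x}_k,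 \boldsymbol u_k)$ for $k = 0, \dots, K-1$, and the intrusive reduced-model states by $\tilde{\boldsymbol x}_0 = \boldsymbol V_n^T \boldsymbol x_0$ and $\tilde{\boldsymbol x}_{k+1} = \sum_{i=1}^{\ell} \tilde{\boldsymbol A}_i \tilde{\boldsymbol x}_k^i + \tilde{\boldsymbol B} \boldsymbol u_k$ for $k = 0, \dots, K-1$. Set $\bar{\boldsymbol X} = [\bar{\boldsymbol x}_0, \dots, \bar{\boldsymbol x}_{K-1}]$, $\bar{\boldsymbol Y} = [\bar{\boldsymbol x}_1, \dots, \bar{\boldsymbol x}_K]$, $\tilde{\boldsymbol X} = [\tilde{\boldsymbol x}_0, \dots, \tilde{\boldsymbol x}_{K-1}]$, $\tilde{\boldsymbol Y} = [\tilde{\boldsymbol x}_1, \dots, \tilde{\boldsymbol x}_K]$. Then $\bar{\boldsymbol X} = \tilde{\boldsymbol X}$ and $\bar{\boldsymbol Y} = \tilde{\boldsymbol Y}$.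
   Context: For a vector $\boldsymbol z \in \mathbb{R}^d$ and $i \in \mathbb{N}$, the $i$-th power $\boldsymbol z^i \in \mathbb{R}^{\binom{d+i-1}{i}}$ is the vector obtained from the $i$-fold Kronecker product $\boldsymbol z \otimes \cdots \otimes \boldsymbol z$ by removing duplicate entries arising from commutativity of multiplication, i.e., it lists each degree-$i$ monomial in the entries of $\boldsymbol z$ exactly once (in a fixed ordering); $\boldsymbol z^1 = \boldsymbol z$. Since these monomials are linearly independent functions, the matrix $\tilde{\boldsymbol A}_i$ is well defined and unique. *)

From HB Require Import structures.
From mathcomp Require Import all_boot all_order all_algebra.
From mathcomp Require Import reals.
Set Implicit Arguments. Unset Strict Implicit. Unset Printing Implicit Defensive.
Import Order.TTheory GRing.Theory Num.Theory.
Local Open Scope ring_scope.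

(* Exponent vectors of the degree-i monomials in d variables:
   alpha : 'I_d -> nat with |alpha| = i (each entry is <= i, hence 'I_i.+1).
   The fixed ordering of the monomials is the canonical enumeration of this
   finite type; its cardinality is binomial (d+i-1, i). *)
Definition mon (d i : nat) :=
  {f : {ffun 'I_d -> 'I_i.+1} | (\sum_(j < d) (f j : nat))%N == i}.

(* the i-th power z^i of a column vector z, listing every degree-i monomial once *)
Definition kpow {R : comRingType} (d i : nat) (z : 'cV[R]_d) : 'cV[R]_#|{: mon d i}| :=
  \col_(k < #|{: mon d i}|) \prod_(j < d) (z j 0) ^+ (val (sval (enum_val k) j)).

Definition polysys {R : comRingType} (N p l : nat)
  (A : forall i : nat, 'M[R]_(N, #|{: mon N i}|)) (B : 'M[R]_(N, p))
  (x : 'cV[R]_N) (u : 'cV[R]_p) : 'cV[R]_N :=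
  \sum_(1 <= i < l.+1) A i *m kpow i x + B *m u.

Fixpoint xbar {R : comRingType} (N n p l : nat)
  (A : forall i : nat, 'M[R]_(N, #|{: mon N i}|)) (B : 'M[R]_(N, p))
  (V : 'M[R]_(N, n)) (x0 : 'cV[R]_N) (u : nat -> 'cV[R]_p) (k : nat) : 'cV[R]_n :=
  match k with
  | 0 => V^T *m x0
  | k'.+1 => V^T *m polysys l A B (V *m xbar l A B V x0 u k') (u k')
  end.

Fixpoint xtil {R : comRingType} (N n p l : nat)
  (At : forall i : nat, 'M[R]_(n, #|{: mon n i}|)) (Bt : 'M[R]_(n, p))
  (V : 'M[R]_(N, n)) (x0 : 'cV[R]_N) (u : nat -> 'cV[R]_p) (k : nat) : 'cV[R]_n :=
  match k with
  | 0 => V^T *m x0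
  | k'.+1 => polysys l At Bt (xtil l At Bt V x0 u k') (u k')
  end.

Definition snap {R : Type} (n K off : nat) (s : nat -> 'cV[R]_n) : 'M[R]_(n, K) :=
  \matrix_(r < n, c < K) s (c + off)%N r 0.

From HB Require Import structures.
From mathcomp Require Import all_boot all_order all_algebra.
From mathcomp Require Import reals.
Import GRing.Theory Num.Theory.
Local Open Scope ring_scope.

(* The Galerkin projection of one step of the full model at a point of the
   reduced space is one step of the intrusive reduced model:
   V^T f(V y, u) = sum_i At_i y^i + (V^T B) u, by linearity of V^T and the
   defining identity of the At_i.  The re-projected and the reduced
   trajectories therefore share their start V^T x0 and their step map, so they
   coincide, and so do all their snapshot matrices. *)

Section GalerkinProjection.

Variables (R : comRingType) (N n p l : nat).
Variables (A : forall i : nat, 'M[R]_(N, #|{: mon N i}|)) (B : 'M[R]_(N, p)).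
Variables (V : 'M[R]_(N, n)) (At : forall i : nat, 'M[R]_(n, #|{: mon n i}|)).
Hypothesis hAt : forall i : nat, (1 <= i <= l)%N ->
  forall y : 'cV[R]_n, At i *m kpow i y = V^T *m A i *m kpow i (V *m y).

Lemma galerkin_polysys (y : 'cV[R]_n) (w : 'cV[R]_p) :
  V^T *m polysys l A B (V *m y) w = polysys l At (V^T *m B) y w.
Proof.
rewrite /polysys mulmxDr mulmx_sumr mulmxA; congr (_ + _).
apply: eq_big_nat => i /andP [i_gt0 i_le_l].
by rewrite hAt ?mulmxA // i_gt0 -ltnS.
Qed.

Lemma xbar_xtil (x0 : 'cV[R]_N) (u : nat -> 'cV[R]_p) :
  xbar l A B V x0 u =1 xtil l At (V^T *m B) V x0 u.
Proof. by elim=> [|k IHk] //=; rewrite IHk galerkin_polysys. Qed.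

End GalerkinProjection.

Lemma eq_snap (R : Type) (n K off : nat) (s t : nat -> 'cV[R]_n) :
  s =1 t -> snap K off s = snap K off t.
Proof. by move=> eq_st; apply/matrixP => r c; rewrite !mxE eq_st. Qed.

Theorem proposition3p1 (R : realType) (N n p l K : nat) (hnN : (n <= N)%N)
  (A : forall i : nat, 'M[R]_(N, #|{: mon N i}|)) (B : 'M[R]_(N, p))
  (V : 'M[R]_(N, n)) (hV : V^T *m V = 1%:M)
  (At : forall i : nat, 'M[R]_(n, #|{: mon n i}|))
  (hAt : forall i : nat, (1 <= i <= l)%N ->
           forall y : 'cV[R]_n, At i *m kpow i y = V^T *m A i *m kpow i (V *m y))
  (x0 : 'cV[R]_N) (hx0 : exists y : 'cV[R]_n, x0 = V *m y)
  (u : nat -> 'cV[R]_p) :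
  let Bt := V^T *m B in
  snap K 0 (xbar l A B V x0 u) = snap K 0 (xtil l At Bt V x0 u) /\
  snap K 1 (xbar l A B V x0 u) = snap K 1 (xtil l At Bt V x0 u).
Proof.
by split; apply: eq_snap; exact: xbar_xtil.
Qed.
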